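(* Let $Y(0),Y(1)$ be integrable real-valued random variables, $\tau=Y(1)-Y(0)$, and $X$ a random vector with support $\mathcal{X}$. Each of the following two conditions implies that for all $x_1,x_2\in\mathcal{X}$, $$E[Y(0)|X=x_1]\geq E[Y(0)|X=x_2]\iff E[Y(1)|X=x_1]\geq E[Y(1)|X=x_2].$$ (a) For all $x_1,x_2\in\mathcal{X}$: $E[Y(0)|X=x_1]\geq E[Y(0)|X=x_2]\implies E[\tau|X=x_1]\geq E[\tau|X=x_2]$. (b) For all $x_1,x_2\in\mathcal{X}$: $|E[\tau|X=x_1]-E[\tau|X=x_2]|\leq|E[Y(0)|X=x_2]-E[Y(0)|X=x_1]|$, with strict inequality whenever the right-hand side is nonzero.
   Context: Conditional expectations $x\mapsto E[\cdot|X=x]$ are fixed functions on $\mathcal{X}$ (e.g. continuous versions), with $E[\tau|X=x]=E[Y(1)|X=x]-E[Y(0)|X=x]$. *)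

From HB Require Import structures.
From mathcomp Require Import all_boot all_order all_algebra.
From mathcomp Require Import all_classical all_reals.
Set Implicit Arguments. Unset Strict Implicit. Unset Printing Implicit Defensive.
Import Order.TTheory GRing.Theory Num.Theory.

(* Per the paper's standing convention, the conditional expectations
   x |-> E[Y(0)|X=x], E[Y(1)|X=x], E[tau|X=x] are fixed functions on the
   support [Xsupp] of X, with E[tau|X=x] = E[Y(1)|X=x] - E[Y(0)|X=x]. *)

From HB Require Import structures.
From mathcomp Require Import all_boot all_order all_algebra.
From mathcomp Require Import all_classical all_reals.
From mathcomp Require Import lra.
Import Order.TTheory GRing.Theory Num.Theory.
Local Open Scope ring_scope.
Local Open Scope classical_set_scope.

(* Write E[Y(1)|X=x] = E[Y(0)|X=x] + E[tau|X=x]. Under (a) the two summands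
   move together, so the sum moves with E[Y(0)|X=x]. Under (b) the change in
   E[tau|X=x] is strictly smaller in size than that of E[Y(0)|X=x] (and zero
   when the latter is zero), so it cannot reverse the sign of the total
   change. *)

Section PerturbedOrder.
Variable R : realDomainType.
Implicit Types a b d e ta tb : R.

Lemma ler_add_comonotone a b ta tb :
  (b <= a -> tb <= ta) -> (a <= b -> ta <= tb) -> (b <= a <-> b + tb <= a + ta).
Proof.
move=> le_t le_t'; split=> [le_ba | le_sum]; first by rewrite lerD // le_t.
case: (lerP b a) => // lt_ab.
by have := le_t' (ltW lt_ab); lra.
Qed.

Lemma addr_ge0_dominated d e :
  `|e| <= `|d| -> (`|d| != 0 -> `|e| < `|d|) -> (0 <= d + e) = (0 <= d).
Proof.
have [-> | d_neq0 _] := eqVneq d 0.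
  by rewrite normr0 normr_le0 => /eqP -> _; rewrite addr0.
rewrite normr_eq0 d_neq0 => /(_ isT).
case: (ltrgt0P d) d_neq0 => [d_gt0 | d_lt0 | //] _;
  rewrite ltr_norml => /andP[lo hi].
- by apply/idP; lra.
- by apply/negbTE; rewrite -ltNge; lra.
Qed.

Lemma ler_add_dominated a b ta tb :
  `|ta - tb| <= `|b - a| -> (`|b - a| != 0 -> `|ta - tb| < `|b - a|) ->
  (b <= a <-> b + tb <= a + ta).
Proof.
rewrite [`|b - a|]distrC => le_t lt_t.
rewrite -subr_ge0 -[b + tb <= _]subr_ge0 opprD addrACA.
by rewrite (addr_ge0_dominated _ _ le_t lt_t).
Qed.

End PerturbedOrder.

Theorem proposition1 (R : realType) (T : Type) (Xsupp : set T)
  (m0 m1 mtau : T -> R)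
  (hmtau : forall x, Xsupp x -> mtau x = m1 x - m0 x) :
  let conclusion := forall x1 x2, Xsupp x1 -> Xsupp x2 ->
      (m0 x1 >= m0 x2 <-> m1 x1 >= m1 x2) in
  ((forall x1 x2, Xsupp x1 -> Xsupp x2 ->
      m0 x1 >= m0 x2 -> mtau x1 >= mtau x2) -> conclusion) /\
  ((forall x1 x2, Xsupp x1 -> Xsupp x2 ->
      `|mtau x1 - mtau x2| <= `|m0 x2 - m0 x1| /\
      (`|m0 x2 - m0 x1| != 0 -> `|mtau x1 - mtau x2| < `|m0 x2 - m0 x1|))
    -> conclusion).
Proof.
have m1E x : Xsupp x -> m1 x = m0 x + mtau x.
  by move=> Xx; rewrite hmtau // addrC subrK.
move=> conclusion; split=> hyp x1 x2 X1 X2; rewrite !m1E //.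
- exact: ler_add_comonotone (hyp x1 x2 X1 X2) (hyp x2 x1 X2 X1).
- by have [] := hyp x1 x2 X1 X2; apply: ler_add_dominated.
Qed.
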